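(* Let $p \geq 1$. Let the coordinates of $\mathbb{R}^d$ be partitioned into $L$ groups, so that every $\mathbf{x} \in \mathbb{R}^d$ is written $\mathbf{x} = ({\mathbf{x}^{(1)}}^\top, \ldots, {\mathbf{x}^{(L)}}^\top)^\top$ with $\mathbf{x}^{(\ell)} \in \mathbb{R}^{d_\ell}$ and $\sum_{\ell=1}^L d_\ell = d$, and let $d(\cdot,\cdot)$ be a distance function (metric) applied to each group. For discrete probability measures $\mu = \sum_{i=1}^n a_i \delta_{\mathbf{x}_i}$ and $\nu = \sum_{j=1}^m b_j \delta_{\mathbf{y}_j}$ on $\mathbb{R}^d$ define $$\mathrm{FRWD}_p(\mu,\nu) = \left( \min_{\boldsymbol{\Pi} \in U(\mu,\nu)} \max_{\boldsymbol{\alpha} \in \Sigma^L} \sum_{i=1}^n \sum_{j=1}^m \pi_{ij} \sum_{\ell=1}^L \alpha_\ell\, d(\mathbf{x}_i^{(\ell)}, \mathbf{y}_j^{(\ell)})^p \right)^{1/p}.$$ Then $\mathrm{FRWD}_p$ is a distance (on discrete probability measures on $\mathbb{R}^d$).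
   Context: $U(\mu,\nu) = \{\boldsymbol{\Pi} \in \mathbb{R}_+^{n\times m} : \boldsymbol{\Pi}\mathbf{1}_m = \mathbf{a},\ \boldsymbol{\Pi}^\top \mathbf{1}_n = \mathbf{b}\}$ is the set of transport plans, where $\mathbf{a}=(a_1,\dots,a_n)^\top \in \mathbb{R}_+^n$ and $\mathbf{b}=(b_1,\dots,b_m)^\top\in\mathbb{R}_+^m$ are the weight vectors of $\mu$ and $\nu$. $\Sigma^L = \{\boldsymbol{\alpha} \in \mathbb{R}_+^L : \boldsymbol{\alpha}^\top \mathbf{1}_L = 1\}$ is the probability simplex. ''Distance'' means symmetric, nonnegative, zero exactly when $\mu=\nu$, and satisfying the triangle inequality. *)

From HB Require Import structures.
From mathcomp Require Import all_boot all_order all_algebra.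
From mathcomp Require Import all_classical all_reals all_analysis.
Set Implicit Arguments. Unset Strict Implicit. Unset Printing Implicit Defensive.
Import Order.TTheory GRing.Theory Num.Theory.
Local Open Scope classical_set_scope.
Local Open Scope ring_scope.

Definition is_metric (R : realType) (T : Type) (f : T -> T -> R) : Prop :=
  [/\ (forall x y, 0 <= f x y),
      (forall x y, f x y = f y x),
      (forall x y, f x y = 0 <-> x = y)
    & (forall x y z, f x z <= f x y + f y z)].

(* Points of R^d, d = \sum_l d_l, viewed as row vectors; the l-th group of
   coordinates x^(l) \in R^(d_l) is the l-th column block [submxrow x l]. *)
Definition Rdpoint (R : realType) (L : nat) (dl : 'I_L -> nat) :=
  'rV[R]_(\sum_(l < L) dl l).

Definition block (R : realType) (L : nat) (dl : 'I_L -> nat)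
  (x : Rdpoint R dl) (l : 'I_L) : 'rV[R]_(dl l) :=
  @submxrow R L dl 1 x l.

(* A discrete probability measure  mu = \sum_{i<n} a_i delta_{x_i}  on a type P. *)
Record dpm (R : realType) (P : Type) := DPM {
  npts : nat;
  wt : 'I_npts -> R;
  pt : 'I_npts -> P;
  wt_ge0 : forall i, 0 <= wt i;
  wt_sum1 : \sum_(i < npts) wt i = 1 }.
Arguments wt {R P} d _.
Arguments pt {R P} d _.

Definition dpm_meas (R : realType) (P : Type) (mu : dpm R P) (A : set P) : R :=
  \sum_(i < npts mu | pt mu i \in A) wt mu i.

Definition dpm_eq (R : realType) (P : Type) (mu nu : dpm R P) : Prop :=
  forall A : set P, dpm_meas mu A = dpm_meas nu A.

Definition coupling (R : realType) (P : Type) (mu nu : dpm R P)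
  (Pi : 'M[R]_(npts mu, npts nu)) : Prop :=
  [/\ (forall i j, 0 <= Pi i j),
      (forall i, \sum_(j < npts nu) Pi i j = wt mu i)
    & (forall j, \sum_(i < npts mu) Pi i j = wt nu j)].
Arguments coupling {R P} mu nu Pi.

Definition simplex (R : realType) (L : nat) (al : 'I_L -> R) : Prop :=
  (forall l, 0 <= al l) /\ \sum_(l < L) al l = 1.

Definition frwd_cost (R : realType) (L : nat) (dl : 'I_L -> nat)
  (dist : forall l : 'I_L, 'rV[R]_(dl l) -> 'rV[R]_(dl l) -> R) (p : R)
  (mu nu : dpm R (Rdpoint R dl)) (Pi : 'M[R]_(npts mu, npts nu))
  (al : 'I_L -> R) : R :=
  \sum_(i < npts mu) \sum_(j < npts nu)
     Pi i j * \sum_(l < L) al l *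
        powR (dist l (block (pt mu i) l) (block (pt nu j) l)) p.

(* FRWD_p(mu,nu) = ( min_{Pi in U} max_{alpha in Sigma^L} cost )^(1/p);
   min/max (which are attained) are written as inf/sup. *)
Definition FRWD (R : realType) (L : nat) (dl : 'I_L -> nat)
  (dist : forall l : 'I_L, 'rV[R]_(dl l) -> 'rV[R]_(dl l) -> R) (p : R)
  (mu nu : dpm R (Rdpoint R dl)) : R :=
  powR
    (inf [set c | exists2 Pi, coupling mu nu Pi &
           c = sup [set v | exists2 al, simplex al &
                      v = frwd_cost dist p Pi al]])
    p^-1.

From HB Require Import structures.
From mathcomp Require Import all_boot all_order all_algebra.
From mathcomp Require Import all_classical all_reals all_analysis.
From mathcomp Require Import ring.
Import Order.TTheory GRing.Theory Num.Theory.
Set Implicit Arguments. Unset Strict Implicit. Unset Printing Implicit Defensive.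
Local Open Scope classical_set_scope.
Local Open Scope ring_scope.

(* Symmetry is inherited from the transposition of transport plans.  If
   FRWD_p(mu, nu) = 0, some plans have arbitrarily small cost for the uniform
   weights alpha_l = 1/L, hence move arbitrarily little mass between distinct
   points, so mu = nu; conversely equal measures are coupled along the diagonal.
   For the triangle inequality, glue near-optimal plans in U(mu, nu) and
   U(nu, eta) along nu.  For A, B > 0, convexity of t |-> t^p gives
   (u + v)^p <= (A/(A+B))^(1-p) u^p + (B/(A+B))^(1-p) v^p; applied blockwise to
   d(x, z) <= d(x, y) + d(y, z), it bounds the cost of the glued plan by
   (A + B)^p for every alpha at once, as soon as the two plans have worst-case
   costs below A^p and B^p. *)

Lemma mulfK_cond (R : fieldType) (x b : R) : (b = 0 -> x = 0) -> x * b / b = x.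
Proof. by move=> h; have [b0|/mulfK //] := eqVneq b 0; rewrite b0 mulr0 mul0r h. Qed.

Lemma exists_nonzero_lbound (R : realFieldType) (I : finType) (F : I -> R) :
  exists2 K, 0 <= K & forall i, F i != 0 -> 1 <= `|F i| * K.
Proof.
exists (\sum_i `|F i|^-1) => [|i Fi0]; first by rewrite sumr_ge0.
have nFi0 : `|F i| != 0 by rewrite normr_eq0.
rewrite -(mulfV nFi0) ler_wpM2l // (bigD1 i) //= lerDl.
by rewrite sumr_ge0.
Qed.

Section Powers.
Variable R : realType.
Implicit Types p A B u v : R.

Lemma powR_div u A p : 0 <= u -> 0 <= A -> (u / A) `^ p = u `^ p / A `^ p.
Proof.
move=> u_ge0 A_ge0; rewrite powRM ?invr_ge0 // -powR_inv1 // powRAC.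
by rewrite powR_inv1 // powR_ge0.
Qed.

Lemma powRrK p u : p != 0 -> 0 <= u -> (u `^ p) `^ p^-1 = u.
Proof. by move=> p_neq0 u_ge0; rewrite -powRrM mulfV // powRr1. Qed.

Lemma powRrVK p u : p != 0 -> 0 <= u -> (u `^ p^-1) `^ p = u.
Proof. by move=> p_neq0 u_ge0; rewrite -powRrM mulVf // powRr1. Qed.

(* split_wt p A B = (A / (A + B)) ^ (1 - p) *)
Definition split_wt p A B : R := (A + B) `^ p * (A / (A + B)) / A `^ p.

Lemma split_wt_ge0 p A B : 0 <= A -> 0 <= B -> 0 <= split_wt p A B.
Proof.
by move=> A_ge0 B_ge0; rewrite !mulr_ge0 ?invr_ge0 ?powR_ge0 ?addr_ge0.
Qed.

Lemma split_wt_powR p A B : 0 < A -> 0 < B ->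
  split_wt p A B * A `^ p + split_wt p B A * B `^ p = (A + B) `^ p.
Proof.
move=> A_gt0 B_gt0; have AB_gt0 : 0 < A + B by rewrite addr_gt0.
rewrite /split_wt !divfK ?gt_eqF ?powR_gt0 // [B + A]addrC -mulrDr -mulrDl.
by rewrite divff ?gt_eqF // mulr1.
Qed.

Lemma powRD_le_split p A B u v : 1 <= p -> 0 < A -> 0 < B -> 0 <= u -> 0 <= v ->
  (u + v) `^ p <= split_wt p A B * u `^ p + split_wt p B A * v `^ p.
Proof.
move=> p_ge1 A_gt0 B_gt0 u_ge0 v_ge0; have AB_gt0 : 0 < A + B by rewrite addr_gt0.
have A_ge0 := ltW A_gt0; have B_ge0 := ltW B_gt0.
have t_ge0 : 0 <= A / (A + B) by rewrite divr_ge0 ?addr_ge0.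
have t_le1 : A / (A + B) <= 1 by rewrite ler_pdivrMr // mul1r lerDl.
have nonneg (x : R) : 0 <= x -> x \in `[0, +oo[%classic.
  by move=> x_ge0; rewrite inE /= in_itv /= andbT.
have := @convex_powR R p p_ge1 (Itv01 t_ge0 t_le1) (u / A) (v / B).
move=> /(_ (nonneg _ (divr_ge0 u_ge0 A_ge0)) (nonneg _ (divr_ge0 v_ge0 B_ge0))).
rewrite [conv _ _ _]convRE [conv _ _ _]convRE /= /unstable.onem.
have -> : A / (A + B) * (u / A) + (1 - A / (A + B)) * (v / B) = (u + v) / (A + B).
  by field; rewrite !gt_eqF.
move=> conv_le.
have -> : u + v = (A + B) * ((u + v) / (A + B)) by field; rewrite gt_eqF.
rewrite powRM ?divr_ge0 ?addr_ge0 //.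
have -> : split_wt p A B * u `^ p + split_wt p B A * v `^ p =
    (A + B) `^ p * (A / (A + B) * (u / A) `^ p + (1 - A / (A + B)) * (v / B) `^ p).
  rewrite !powR_div // /split_wt [B + A]addrC.
  by field; rewrite !gt_eqF ?powR_gt0.
by apply: ler_wpM2l; [exact: powR_ge0 | exact: conv_le].
Qed.
End Powers.

Section Transport.
Variables (R : realType) (P : eqType).
Implicit Types (mu nu eta : dpm R P) (c : P -> P -> R).

Definition tcost mu nu c (Pi : 'M[R]_(npts mu, npts nu)) : R :=
  \sum_i \sum_j Pi i j * c (pt mu i) (pt nu j).

Lemma tcost_ge0 mu nu c (Pi : 'M[R]_(npts mu, npts nu)) :
  coupling mu nu Pi -> (forall x y, 0 <= c x y) -> 0 <= tcost c Pi.
Proof.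
by case=> Pi_ge0 _ _ c_ge0; do 2 (apply: sumr_ge0 => ? _); rewrite mulr_ge0.
Qed.

Lemma ler_tcost mu nu c1 c2 (Pi : 'M[R]_(npts mu, npts nu)) :
  coupling mu nu Pi -> (forall x y, c1 x y <= c2 x y) -> tcost c1 Pi <= tcost c2 Pi.
Proof.
by case=> Pi_ge0 _ _ c12; do 2 (apply: ler_sum => ? _); rewrite ler_wpM2l.
Qed.

Lemma coupling_trmx mu nu (Pi : 'M[R]_(npts mu, npts nu)) :
  coupling mu nu Pi -> coupling nu mu Pi^T.
Proof.
case=> Pi_ge0 Pi_row Pi_col; split=> [i j|i|j]; rewrite ?mxE //.
- by under eq_bigr do rewrite mxE.
- by under eq_bigr do rewrite mxE.
Qed.

Lemma tcost_trmx mu nu c (Pi : 'M[R]_(npts mu, npts nu)) :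
  (forall x y, c x y = c y x) -> tcost c Pi^T = tcost c Pi.
Proof.
move=> cC; rewrite /tcost exchange_big; apply: eq_bigr => i _; apply: eq_bigr => j _.
by rewrite mxE cC.
Qed.

Lemma coupling_eq0_row mu nu (Pi : 'M[R]_(npts mu, npts nu)) i j :
  coupling mu nu Pi -> wt mu i = 0 -> Pi i j = 0.
Proof.
by case=> Pi_ge0 Pi_row _ wi0; move: (Pi_row i); rewrite wi0 => /psumr_eq0P; apply.
Qed.

Lemma coupling_eq0_col mu nu (Pi : 'M[R]_(npts mu, npts nu)) i j :
  coupling mu nu Pi -> wt nu j = 0 -> Pi i j = 0.
Proof.
by case=> Pi_ge0 _ Pi_col wj0; move: (Pi_col j); rewrite wj0 => /psumr_eq0P; apply.
Qed.

Definition product_plan mu nu : 'M[R]_(npts mu, npts nu) :=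
  \matrix_(i, j) (wt mu i * wt nu j).

Lemma product_plan_coupling mu nu : coupling mu nu (product_plan mu nu).
Proof.
split=> [i j|i|j]; rewrite ?mxE ?mulr_ge0 ?wt_ge0 //.
- by under eq_bigr do rewrite mxE; rewrite -mulr_sumr wt_sum1 mulr1.
- by under eq_bigr do rewrite mxE; rewrite -mulr_suml wt_sum1 mul1r.
Qed.

Section Gluing.
Variables (mu nu eta : dpm R P).
Variables (P1 : 'M[R]_(npts mu, npts nu)) (P2 : 'M[R]_(npts nu, npts eta)).
Hypotheses (cP1 : coupling mu nu P1) (cP2 : coupling nu eta P2).

(* Where wt nu j = 0 the division yields 0, as do P1 i j and P2 j k. *)
Definition glue : 'M[R]_(npts mu, npts eta) :=
  \matrix_(i, k) \sum_j P1 i j * P2 j k / wt nu j.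

Lemma sum_glue_r i j : \sum_k P1 i j * P2 j k / wt nu j = P1 i j.
Proof.
rewrite -big_distrl -big_distrr /=; have [_ -> _] := cP2.
by apply: mulfK_cond; apply: coupling_eq0_col cP1.
Qed.

Lemma sum_glue_l j k : \sum_i P1 i j * P2 j k / wt nu j = P2 j k.
Proof.
rewrite -!big_distrl /=; have [_ _ ->] := cP1.
by rewrite [wt nu j * _]mulrC; apply: mulfK_cond; apply: coupling_eq0_row cP2.
Qed.

Lemma glue_coupling : coupling mu eta glue.
Proof.
have [P1_ge0 P1_row _] := cP1; have [P2_ge0 _ P2_col] := cP2.
split=> [i k|i|k].
- by rewrite mxE sumr_ge0 // => j _; rewrite divr_ge0 ?mulr_ge0 ?wt_ge0.
- under eq_bigr do rewrite mxE.
  by rewrite exchange_big -P1_row; apply: eq_bigr => j _; rewrite sum_glue_r.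
- under eq_bigr do rewrite mxE.
  by rewrite exchange_big -P2_col; apply: eq_bigr => j _; rewrite sum_glue_l.
Qed.

Lemma tcost_glue_le c1 c2 c3 k1 k2 :
  (forall x y z, c3 x z <= k1 * c1 x y + k2 * c2 y z) ->
  tcost c3 glue <= k1 * tcost c1 P1 + k2 * tcost c2 P2.
Proof.
move=> c3_le; pose w i j k := P1 i j * P2 j k / wt nu j.
have w_ge0 i j k : 0 <= w i j k.
  by have [? _ _] := cP1; have [? _ _] := cP2; rewrite divr_ge0 ?mulr_ge0 ?wt_ge0.
have tcost1 : \sum_i \sum_k \sum_j w i j k * c1 (pt mu i) (pt nu j) = tcost c1 P1.
  apply: eq_bigr => i _; rewrite exchange_big; apply: eq_bigr => j _.
  by rewrite -big_distrl sum_glue_r.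
have tcost2 : \sum_i \sum_k \sum_j w i j k * c2 (pt nu j) (pt eta k) = tcost c2 P2.
  rewrite exchange_big; under eq_bigr do rewrite exchange_big.
  rewrite exchange_big; apply: eq_bigr => j _; apply: eq_bigr => k _.
  by rewrite -big_distrl sum_glue_l.
rewrite -tcost1 -tcost2 !mulr_sumr -big_split; apply: ler_sum => i _.
rewrite !mulr_sumr -big_split; apply: ler_sum => k _.
rewrite mxE big_distrl !mulr_sumr -big_split; apply: ler_sum => j _.
rewrite /= mulrCA [k2 * _]mulrCA -mulrDr.
by apply: ler_wpM2l; [exact: w_ge0 | exact: c3_le].
Qed.

End Gluing.

Lemma dpm_measE mu A : dpm_meas mu A = \sum_i (pt mu i \in A)%:R * wt mu i.
Proof.
rewrite /dpm_meas big_mkcond; apply: eq_bigr => i _.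
by case: (pt mu i \in A); rewrite ?mul1r ?mul0r.
Qed.

Lemma wt_le_meas1 mu i : wt mu i <= dpm_meas mu [set pt mu i].
Proof.
by rewrite /dpm_meas (bigD1 i) ?in_set1 //= lerDl sumr_ge0 // => ? _; apply: wt_ge0.
Qed.

Definition diag_plan mu nu : 'M[R]_(npts mu, npts nu) :=
  \matrix_(i, j) if pt mu i == pt nu j
                 then wt mu i * wt nu j / dpm_meas mu [set pt mu i] else 0.

Lemma diag_plan_coupling mu nu : dpm_eq mu nu -> coupling mu nu (diag_plan mu nu).
Proof.
move=> mu_nu; have meas1_eq0 eta i : dpm_meas eta [set pt eta i] = 0 -> wt eta i = 0.
  by move=> h; apply/eqP; rewrite eq_le wt_ge0 andbT -h wt_le_meas1.
split=> [i j|i|j]; rewrite /diag_plan.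
- rewrite mxE; case: ifP => // _.
  by rewrite divr_ge0 ?mulr_ge0 ?wt_ge0 // /dpm_meas sumr_ge0 // => ? _; apply: wt_ge0.
- under eq_bigr do rewrite mxE.
  rewrite -big_mkcond /=; under eq_bigr do rewrite mulrAC.
  rewrite -big_distrr /=.
  have -> : \sum_(j | pt mu i == pt nu j) wt nu j = dpm_meas mu [set pt mu i].
    by rewrite mu_nu; apply: eq_bigl => j; rewrite in_set1 eq_sym.
  by rewrite mulrAC; apply: mulfK_cond => /meas1_eq0.
- under eq_bigr do rewrite mxE.
  rewrite -big_mkcond /=.
  under eq_bigr => i /eqP -> do rewrite -mulrA.
  rewrite -big_distrl /=.
  have -> : \sum_(i | pt mu i == pt nu j) wt mu i = dpm_meas nu [set pt nu j].
    by rewrite -mu_nu; apply: eq_bigl => i; rewrite in_set1.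
  by rewrite -mu_nu mulrC mulrAC; apply: mulfK_cond; rewrite mu_nu => /meas1_eq0.
Qed.

Lemma tcost_diag_plan mu nu c : (forall x, c x x = 0) -> tcost c (diag_plan mu nu) = 0.
Proof.
move=> c_diag; apply: big1 => i _; apply: big1 => j _; rewrite mxE.
by case: eqP => [->|_]; rewrite ?c_diag ?mulr0 ?mul0r.
Qed.

Lemma coupling_meas_subE mu nu (Pi : 'M[R]_(npts mu, npts nu)) A :
  coupling mu nu Pi -> dpm_meas mu A - dpm_meas nu A =
    \sum_i \sum_j Pi i j * ((pt mu i \in A)%:R - (pt nu j \in A)%:R).
Proof.
case=> _ Pi_row Pi_col; rewrite !dpm_measE.
have -> : \sum_j (pt nu j \in A)%:R * wt nu j =
          \sum_i \sum_j Pi i j * (pt nu j \in A)%:R.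
  rewrite exchange_big; apply: eq_bigr => j _.
  by rewrite -Pi_col mulr_sumr; apply: eq_bigr => i _; rewrite mulrC.
rewrite -sumrB; apply: eq_bigr => i _.
by rewrite -Pi_row mulr_sumr -sumrB; apply: eq_bigr => j _; rewrite mulrBr mulrC.
Qed.

Section Separating.
Variables (c : P -> P -> R) (mu nu : dpm R P).
Hypotheses (c_ge0 : forall x y, 0 <= c x y) (c_sep : forall x y, c x y = 0 -> x = y).

Lemma coupling_meas_dev :
  exists2 K, 0 <= K & forall (Pi : 'M[R]_(npts mu, npts nu)) A, coupling mu nu Pi ->
    `|dpm_meas mu A - dpm_meas nu A| <= K * tcost c Pi.
Proof.
have [K K_ge0 K_scale] := exists_nonzero_lbound (fun ij : 'I_(npts mu) * 'I_(npts nu) =>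
  c (pt mu ij.1) (pt nu ij.2)).
exists K => // Pi A cPi; have [Pi_ge0 _ _] := cPi.
rewrite (coupling_meas_subE A cPi) /tcost mulr_sumr.
apply: le_trans (ler_norm_sum _ _ _) _; apply: ler_sum => i _.
rewrite mulr_sumr; apply: le_trans (ler_norm_sum _ _ _) _; apply: ler_sum => j _.
rewrite normrM ger0_norm // mulrCA; apply: ler_wpM2l => //.
have [/c_sep ->|cij0] := eqVneq (c (pt mu i) (pt nu j)) 0.
  by rewrite subrr normr0 mulr_ge0.
apply: le_trans (_ : 1 <= _); last first.
  by rewrite mulrC -[c _ _]ger0_norm //; apply: (K_scale (i, j)).
by case: (_ \in A); case: (_ \in A); rewrite ?subrr ?subr0 ?sub0r ?normrN ?normr0 ?normr1.
Qed.

Lemma dpm_eq_of_tcost_small :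
  (forall e, 0 < e -> exists2 Pi, coupling mu nu Pi & tcost c Pi < e) -> dpm_eq mu nu.
Proof.
move=> small A; have [K K_ge0 dev] := coupling_meas_dev.
apply/eqP; rewrite -subr_eq0 -normr_le0; apply/ler_addgt0Pr => e e_gt0.
have Ke_gt0 : 0 < e / (K + 1) by rewrite divr_gt0 // ltr_wpDl.
have [Pi cPi tcost_lt] := small _ Ke_gt0.
rewrite add0r; apply: le_trans (dev Pi A cPi) _.
apply: le_trans (ler_wpM2l K_ge0 (ltW tcost_lt)) _.
by rewrite mulrA ler_pdivrMr ?ltr_wpDl // mulrC ler_pM2l // lerDl.
Qed.
End Separating.

End Transport.

Section FRWD.
Variables (R : realType) (L : nat) (dl : 'I_L -> nat).
Variables (dist : forall l : 'I_L, 'rV[R]_(dl l) -> 'rV[R]_(dl l) -> R) (p : R).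
Arguments dist : clear implicits.
Hypotheses (L_gt0 : (0 < L)%N) (dist_metric : forall l, is_metric (dist l)).
Hypothesis p_ge1 : 1 <= p.

Local Notation point := (Rdpoint R dl).
Implicit Types (mu nu eta : dpm R point) (x y z : point) (al : 'I_L -> R).

Let p_gt0 : 0 < p. Proof. by rewrite (lt_le_trans ltr01). Qed.
Let p_neq0 : p != 0. Proof. by rewrite gt_eqF. Qed.

Definition frwd_ground al x y : R :=
  \sum_l al l * dist l (block x l) (block y l) `^ p.

Lemma frwd_costE mu nu (Pi : 'M[R]_(npts mu, npts nu)) al :
  frwd_cost dist p Pi al = tcost (frwd_ground al) Pi.
Proof. by []. Qed.

Lemma frwd_ground_ge0 al x y : (forall l, 0 <= al l) -> 0 <= frwd_ground al x y.
Proof. by move=> al_ge0; apply: sumr_ge0 => l _; rewrite mulr_ge0 ?powR_ge0. Qed.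

Lemma frwd_groundC al x y : frwd_ground al x y = frwd_ground al y x.
Proof. by apply: eq_bigr => l _; case: (dist_metric l) => _ ->. Qed.

Lemma frwd_ground_xx al x : frwd_ground al x x = 0.
Proof.
apply: big1 => l _; case: (dist_metric l) => _ _ dist0 _.
by rewrite (proj2 (dist0 _ _)) // powR0 // mulr0.
Qed.

Lemma block_inj x y : (forall l, block x l = block y l) -> x = y.
Proof. by move=> xy; rewrite -[x]submxrowK -[y]submxrowK; apply: eq_mxrow. Qed.

Lemma frwd_ground_eq0 al x y : (forall l, 0 < al l) -> frwd_ground al x y = 0 -> x = y.
Proof.
move=> al_gt0 /psumr_eq0P xy0; apply: block_inj => l.
case: (dist_metric l) => _ _ dist0 _; apply/dist0/(@powR_eq0_eq0 _ _ p).
have /eqP := xy0 (fun l _ => mulr_ge0 (ltW (al_gt0 l)) (powR_ge0 _ _)) l isT.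
by rewrite mulf_eq0 gt_eqF //= => /eqP.
Qed.

Lemma ler_frwd_ground al be x y : (forall l, 0 <= al l <= be l) ->
  frwd_ground al x y <= frwd_ground be x y.
Proof.
move=> al_be; apply: ler_sum => l _; have /andP[_ ?] := al_be l.
by rewrite ler_wpM2r ?powR_ge0.
Qed.

Lemma frwd_ground_split al A B x y z : (forall l, 0 <= al l) -> 0 < A -> 0 < B ->
  frwd_ground al x z <=
    split_wt p A B * frwd_ground al x y + split_wt p B A * frwd_ground al y z.
Proof.
move=> al_ge0 A_gt0 B_gt0; rewrite !mulr_sumr -big_split; apply: ler_sum => l _.
rewrite /= mulrCA [split_wt p B A * _]mulrCA -mulrDr ler_wpM2l //.
case: (dist_metric l) => dist_ge0 _ _ dist_tri.
apply: le_trans (powRD_le_split p_ge1 A_gt0 B_gt0 (dist_ge0 _ _) (dist_ge0 _ _)).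
apply: ge0_ler_powR; rewrite ?nnegrE ?addr_ge0 //; exact: ltW.
Qed.

Lemma simplex_le1 al : simplex al -> forall l, 0 <= al l <= 1.
Proof.
by case=> al_ge0 al_sum1 l; rewrite al_ge0 -al_sum1 (bigD1 l) //= lerDl sumr_ge0.
Qed.

Definition uniform_wt : 'I_L -> R := fun=> L%:R^-1.

Lemma uniform_simplex : simplex uniform_wt.
Proof.
split=> [l|]; first by rewrite invr_ge0 ler0n.
by rewrite sumr_const card_ord -[_ *+ L]mulr_natl mulfV // pnatr_eq0 -lt0n.
Qed.

Definition frwd_costs mu nu (Pi : 'M[R]_(npts mu, npts nu)) : set R :=
  [set v | exists2 al, simplex al & v = frwd_cost dist p Pi al].

Definition frwd_worst mu nu (Pi : 'M[R]_(npts mu, npts nu)) : R :=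
  sup (frwd_costs Pi).

Definition frwd_worsts mu nu : set R :=
  [set c | exists2 Pi, coupling mu nu Pi & c = frwd_worst Pi].

Definition frwd_pow mu nu : R := inf (frwd_worsts mu nu).

Lemma FRWDE mu nu : FRWD dist p mu nu = frwd_pow mu nu `^ p^-1.
Proof. by []. Qed.

Section Worst.
Variables (mu nu : dpm R point) (Pi : 'M[R]_(npts mu, npts nu)).
Hypothesis cPi : coupling mu nu Pi.

Lemma frwd_costs_neq0 : frwd_costs Pi !=set0.
Proof.
by exists (frwd_cost dist p Pi uniform_wt), uniform_wt; first exact: uniform_simplex.
Qed.

Lemma frwd_cost_le_worst al : simplex al -> frwd_cost dist p Pi al <= frwd_worst Pi.
Proof.
move=> al_simplex; apply: sup_upper_bound; last by exists al.
split; first exact: frwd_costs_neq0.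
exists (tcost (frwd_ground (fun=> 1 : R)) Pi) => _ [be be_simplex ->].
rewrite frwd_costE; apply: (ler_tcost cPi) => x y.
by apply: ler_frwd_ground; apply: simplex_le1.
Qed.

Lemma frwd_worst_le_ub B :
  (forall al, simplex al -> frwd_cost dist p Pi al <= B) -> frwd_worst Pi <= B.
Proof.
by move=> ub; apply: ge_sup => [|_ [al al_simplex ->]]; [exact: frwd_costs_neq0 | exact: ub].
Qed.

Lemma frwd_worst_ge0 : 0 <= frwd_worst Pi.
Proof.
apply: le_trans (frwd_cost_le_worst uniform_simplex).
rewrite frwd_costE; apply: (tcost_ge0 cPi) => x y.
by apply: frwd_ground_ge0 => l; case: uniform_simplex.
Qed.

End Worst.

Lemma frwd_worst_trmx mu nu (Pi : 'M[R]_(npts mu, npts nu)) :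
  frwd_worst Pi^T = frwd_worst Pi.
Proof.
rewrite /frwd_worst; congr sup; apply/seteqP; split=> _ [al al_simplex ->];
  by exists al; rewrite // !frwd_costE tcost_trmx //; apply: frwd_groundC.
Qed.

Lemma frwd_worsts_neq0 mu nu : frwd_worsts mu nu !=set0.
Proof.
by exists (frwd_worst (product_plan mu nu)), (product_plan mu nu);
  first exact: product_plan_coupling.
Qed.

Lemma frwd_pow_ge0 mu nu : 0 <= frwd_pow mu nu.
Proof.
apply: lb_le_inf => [|_ [Pi cPi ->]]; [exact: frwd_worsts_neq0 | exact: frwd_worst_ge0].
Qed.

Lemma frwd_pow_le_worst mu nu (Pi : 'M[R]_(npts mu, npts nu)) :
  coupling mu nu Pi -> frwd_pow mu nu <= frwd_worst Pi.
Proof.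
move=> cPi; apply: ge_inf; last by exists Pi.
by exists 0 => _ [Pi' cPi' ->]; apply: frwd_worst_ge0.
Qed.

Lemma frwd_pow_lt mu nu C : frwd_pow mu nu < C ->
  exists2 Pi : 'M[R]_(npts mu, npts nu), coupling mu nu Pi & frwd_worst Pi < C.
Proof. by move=> /(inf_lt (frwd_worsts_neq0 mu nu)) [_ [Pi cPi ->] lt_C]; exists Pi. Qed.

Lemma frwd_powC mu nu : frwd_pow mu nu = frwd_pow nu mu.
Proof.
suff sub eta1 eta2 : frwd_worsts eta1 eta2 `<=` frwd_worsts eta2 eta1.
  by rewrite /frwd_pow; congr inf; apply/seteqP; split; apply: sub.
move=> _ [Pi cPi ->]; exists Pi^T; first exact: coupling_trmx.
by rewrite frwd_worst_trmx.
Qed.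

Lemma frwd_pow_eq0 mu nu : frwd_pow mu nu = 0 <-> dpm_eq mu nu.
Proof.
split=> [pow0 | mu_nu].
  have uniform_gt0 l : 0 < uniform_wt l by rewrite invr_gt0 ltr0n.
  apply: (dpm_eq_of_tcost_small (c := frwd_ground uniform_wt)).
  - by move=> x y; apply: frwd_ground_ge0 => l; apply: ltW.
  - by move=> x y; apply: frwd_ground_eq0.
  move=> e e_gt0; have [|Pi cPi worst_lt] := @frwd_pow_lt mu nu e; first by rewrite pow0.
  exists Pi => //; rewrite -frwd_costE.
  exact: le_lt_trans (frwd_cost_le_worst cPi uniform_simplex) worst_lt.
apply/eqP; rewrite eq_le frwd_pow_ge0 andbT.
apply: le_trans (frwd_pow_le_worst (diag_plan_coupling mu_nu)) _.
apply: frwd_worst_le_ub => al _; rewrite frwd_costE tcost_diag_plan //.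
exact: frwd_ground_xx.
Qed.

Lemma FRWD_ge0 mu nu : 0 <= FRWD dist p mu nu.
Proof. exact: powR_ge0. Qed.

Lemma FRWDC mu nu : FRWD dist p mu nu = FRWD dist p nu mu.
Proof. by rewrite !FRWDE frwd_powC. Qed.

Lemma FRWD_eq0 mu nu : FRWD dist p mu nu = 0 <-> dpm_eq mu nu.
Proof.
rewrite FRWDE -frwd_pow_eq0; split=> [/powR_eq0_eq0 // | ->].
by rewrite powR0 // invr_eq0.
Qed.

Lemma frwd_pow_lt_powR mu nu C : FRWD dist p mu nu < C -> frwd_pow mu nu < C `^ p.
Proof.
move=> lt_C; rewrite -(powRrVK p_neq0 (frwd_pow_ge0 mu nu)) -FRWDE.
by apply: gt0_ltr_powR; rewrite ?nnegrE ?FRWD_ge0 ?(ltW (le_lt_trans (FRWD_ge0 _ _) lt_C)).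
Qed.

Lemma FRWD_glue mu nu eta A B :
  FRWD dist p mu nu < A -> FRWD dist p nu eta < B -> FRWD dist p mu eta <= A + B.
Proof.
move=> lt_A lt_B; have A_gt0 := le_lt_trans (FRWD_ge0 _ _) lt_A.
have B_gt0 := le_lt_trans (FRWD_ge0 _ _) lt_B.
have A_ge0 := ltW A_gt0; have B_ge0 := ltW B_gt0.
have [P1 cP1 lt1] := frwd_pow_lt (frwd_pow_lt_powR lt_A).
have [P2 cP2 lt2] := frwd_pow_lt (frwd_pow_lt_powR lt_B).
have pow_le : frwd_pow mu eta <= (A + B) `^ p.
  apply: le_trans (frwd_pow_le_worst (glue_coupling cP1 cP2)) _.
  apply: frwd_worst_le_ub => al al_simplex; have [al_ge0 _] := al_simplex.
  have split x y z := frwd_ground_split x y z al_ge0 A_gt0 B_gt0.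
  rewrite frwd_costE; apply: le_trans (tcost_glue_le cP1 cP2 split) _.
  rewrite -split_wt_powR // -!frwd_costE.
  apply: lerD; rewrite ler_wpM2l ?split_wt_ge0 //.
  - exact: le_trans (frwd_cost_le_worst cP1 al_simplex) (ltW lt1).
  - exact: le_trans (frwd_cost_le_worst cP2 al_simplex) (ltW lt2).
rewrite FRWDE -(powRrK p_neq0 (ltW (addr_gt0 A_gt0 B_gt0))).
by apply: ge0_ler_powR; rewrite ?invr_ge0 ?nnegrE ?powR_ge0 ?frwd_pow_ge0 ?(ltW p_gt0).
Qed.

Lemma FRWD_triangle mu nu eta :
  FRWD dist p mu eta <= FRWD dist p mu nu + FRWD dist p nu eta.
Proof.
apply/ler_addgt0Pr => e e_gt0; rewrite [e]splitr addrACA.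
by apply: (FRWD_glue (nu := nu)); rewrite ltrDl divr_gt0.
Qed.

End FRWD.

Theorem proposition1 (R : realType) (L : nat) (dl : 'I_L -> nat)
  (dist : forall l : 'I_L, 'rV[R]_(dl l) -> 'rV[R]_(dl l) -> R) (p : R) :
  (0 < L)%N ->
  (forall l, is_metric (dist l)) ->
  1 <= p ->
  [/\ (forall mu nu : dpm R (Rdpoint R dl), 0 <= FRWD dist p mu nu),
      (forall mu nu : dpm R (Rdpoint R dl), FRWD dist p mu nu = FRWD dist p nu mu),
      (forall mu nu : dpm R (Rdpoint R dl), FRWD dist p mu nu = 0 <-> dpm_eq mu nu)
    & (forall mu nu eta : dpm R (Rdpoint R dl),
         FRWD dist p mu eta <= FRWD dist p mu nu + FRWD dist p nu eta)].
Proof.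
move=> L_gt0 dist_metric p_ge1; split.
- exact: FRWD_ge0.
- exact: FRWDC.
- exact: FRWD_eq0.
- exact: FRWD_triangle.
Qed.
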